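(* Under the standing setup below, $D_{n-1} \ge F_n$ for all $n \in \mathbb{N}_0$, and consequently, as $n \to +\infty$, \[ a_{-n} u_n + a_{-n+1} u_{n+1} = \frac{\pi}{4} + O\!\left( \Phi^{-2n} \right), \] where $\Phi = \frac{1+\sqrt5}{2}$; i.e. the rational sequence $(a_{-n}u_n + a_{-n+1}u_{n+1})_n$ converges to $\pi/4$ at least as fast as a geometric sequence of ratio $1/\Phi^2$.
   Context: Standing setup: $a_0, a_1 \in \mathbb{Z}$ and $u_0 > u_1 > 0$ are rational numbers with $a_0 \arctan u_0 + a_1 \arctan u_1 = \pi/4$. Let $\alpha := \arctan u_0 / \arctan u_1$ (which is $>1$ and irrational), with infinite simple continued fraction expansion $\alpha = [q_0; q_1, q_2, \dots]$, $q_i \in \mathbb{N}$. The numbers $u_n$ ($n \in \mathbb{N}_0$) are the positive reals with the given $u_0,u_1$ and $\arctan u_n = q_n \arctan u_{n+1} + \arctan u_{n+2}$ for all $n \in \mathbb{N}_0$. The integers $a_{-n}$ for $n \geq 1$ are defined recursively by $a_{-n-1} := q_n a_{-n} + a_{-n+1}$ for all $n \in \mathbb{N}_0$. The sequence $D_k$ ($k \ge -2$) is defined by $D_{-2}=1$, $D_{-1}=0$, $D_k = q_k D_{k-1} + D_{k-2}$ for $k \in \mathbb{N}_0$ (denominators of the convergents of $\alpha$). $(F_n)_{n\ge0}$ is the Fibonacci sequence $F_0=0$, $F_1=1$, $F_{n+2}=F_{n+1}+F_n$. *)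

From Stdlib Require Import Reals Lra ZArith QArith Qreals.
Open Scope R_scope.

Fixpoint cf_x (alpha : R) (n : nat) : R :=
  match n with
  | O => alpha
  | S m => / (cf_x alpha m - IZR (Int_part (cf_x alpha m)))
  end.

Definition cf_q (alpha : R) (n : nat) : nat := Z.to_nat (Int_part (cf_x alpha n)).

(* denD alpha j = D_{j-2}: D_{-2}=1, D_{-1}=0, D_k = q_k D_{k-1} + D_{k-2}. *)
Fixpoint denD (alpha : R) (j : nat) : nat :=
  match j with
  | O => 1%nat
  | S O => 0%nat
  | S ((S k) as j') => (cf_q alpha k * denD alpha j' + denD alpha k)%nat
  end.

(* coefA alpha a0 a1 j = a_{-j+1}: coefA 0 = a_1, coefA 1 = a_0,
   a_{-n-1} = q_n a_{-n} + a_{-n+1}. *)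
Fixpoint coefA (alpha : R) (a0 a1 : Z) (j : nat) : Z :=
  match j with
  | O => a1
  | S O => a0
  | S ((S k) as j') => (Z.of_nat (cf_q alpha k) * coefA alpha a0 a1 j' + coefA alpha a0 a1 k)%Z
  end.

Fixpoint fib (n : nat) : nat :=
  match n with
  | O => 0%nat
  | S O => 1%nat
  | S ((S k) as m) => (fib m + fib k)%nat
  end.

Definition Phi : R := (1 + sqrt 5) / 2.

Definition irrational (x : R) : Prop :=
  ~ exists p q : Z, q <> 0%Z /\ x = IZR p / IZR q.

(* The partial quotients q_1, q_2, ... of an irrational number are all at
   least 1, so the denominators D_k grow at least like the Fibonacci numbers,
   and the angles theta_n = atan u_n decay at least like them:
   theta_{n+2} <= theta_n - theta_{n+1} makes theta_n + theta_{n+1} / Phi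
   shrink by a factor 1/Phi at each step. The recursions for theta_n and a_{-n}
   keep a_{-n} theta_n + a_{-n+1} theta_{n+1} = pi/4 (and, with absolute values,
   keep it bounded), while u_n = tan theta_n = theta_n + O(theta_n^3); hence the
   error is O(theta_n^2) = O(Phi^(-2n)). *)

From Stdlib Require Import Reals Lra Lia ZArith QArith Qreals.
Open Scope R_scope.

Lemma cf_x_irrational alpha : irrational alpha -> forall k, irrational (cf_x alpha k).
Proof.
  intros Ha k; induction k as [|k IHk]; simpl; auto.
  intros [p [q [Hq E]]]. apply IHk.
  set (x := cf_x alpha k) in *. set (I := Int_part x) in *.
  destruct (Req_dec (x - IZR I) 0) as [H0|H0].
  - exists I, 1%Z. split; [lia|]. unfold Rdiv; rewrite Rinv_1. lra.
  - assert (Hp : p <> 0%Z).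
    { intro Hp0; subst p. apply (Rinv_neq_0_compat _ H0). rewrite E. unfold Rdiv; ring. }
    assert (Hq' := not_0_IZR _ Hq). assert (Hp' := not_0_IZR _ Hp).
    assert (Efrac : x - IZR I = IZR q / IZR p).
    { rewrite <- (Rinv_inv (x - IZR I)), E. field. auto. }
    exists (I * p + q)%Z, p. split; auto.
    rewrite plus_IZR, mult_IZR. replace x with (IZR I + IZR q / IZR p) by lra.
    field. auto.
Qed.

Lemma cf_frac_pos alpha k : irrational alpha ->
  0 < cf_x alpha k - IZR (Int_part (cf_x alpha k)) < 1.
Proof.
  intros Ha. destruct (base_Int_part (cf_x alpha k)) as [b1 b2].
  split; [|lra].
  destruct (Req_dec (cf_x alpha k - IZR (Int_part (cf_x alpha k))) 0) as [H0|H0]; [|lra].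
  exfalso. apply (cf_x_irrational alpha Ha k).
  exists (Int_part (cf_x alpha k)), 1%Z. split; [lia|].
  unfold Rdiv; rewrite Rinv_1. lra.
Qed.

Lemma cf_q_succ_ge1 alpha k : irrational alpha -> (1 <= cf_q alpha (S k))%nat.
Proof.
  intros Ha. unfold cf_q. simpl.
  assert (Hf := cf_frac_pos alpha k Ha).
  set (f := cf_x alpha k - IZR (Int_part (cf_x alpha k))) in *.
  assert (Hinv : 1 < / f).
  { apply (Rmult_lt_reg_l f); [lra|]. rewrite Rinv_r; lra. }
  destruct (base_Int_part (/ f)) as [b1 b2].
  assert (Hpos : 0 < IZR (Int_part (/ f))) by lra.
  apply lt_IZR in Hpos. lia.
Qed.

Lemma fib_le_denD alpha : irrational alpha -> forall n, (fib n <= denD alpha (S n))%nat.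
Proof.
  intros Ha.
  enough (H : forall n, (fib n <= denD alpha (S n))%nat /\
                        (fib (S n) <= denD alpha (S (S n)))%nat) by (intro n; apply H).
  induction n as [|n [IH1 IH2]]; [simpl; lia|].
  split; auto.
  change (fib (S (S n))) with (fib (S n) + fib n)%nat.
  change (denD alpha (S (S (S n)))) with
    (cf_q alpha (S n) * denD alpha (S (S n)) + denD alpha (S n))%nat.
  assert (H1 := cf_q_succ_ge1 alpha n Ha). nia.
Qed.

Lemma Rabs_tan_sub_le_cube t : 0 <= t <= 1 -> Rabs (tan t - t) <= t ^ 3.
Proof.
  intros [H0 H1].
  assert (HP := PI2_1).
  destruct (sin_bound t 0 ltac:(lra) ltac:(lra)) as [s1 s2].
  destruct (cos_bound t 0 ltac:(lra) ltac:(lra)) as [c1 c2].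
  unfold sin_approx, cos_approx, sin_term, cos_term in *. simpl in *.
  unfold tan. set (s := sin t) in *. set (c := cos t) in *.
  assert (Hc : 1/2 <= c) by nra.
  set (y := s / c).
  assert (Hy : (y - t) * c = s - t * c) by (unfold y; field; lra).
  apply Rabs_le. split.
  - assert (s - t * c >= - (t ^ 3) / 6) by nra.
    destruct (Rle_or_lt 0 (y - t)); [nra|].
    assert ((y - t) * (c - 1/2) <= 0) by nra. nra.
  - assert (s - t * c <= t ^ 3 / 2) by nra.
    destruct (Rle_or_lt (y - t) 0); [nra|].
    assert ((y - t) * (c - 1/2) >= 0) by nra. nra.
Qed.

Lemma Rabs_tan_pair_sub_le a b t t' : 0 < t' <= t -> t <= 1 ->
  Rabs (a * tan t + b * tan t' - (a * t + b * t'))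
  <= (Rabs a * t + Rabs b * t') * (t * t).
Proof.
  intros Ht' Ht.
  assert (Herr : Rabs (tan t - t) <= t * (t * t)).
  { replace (t * (t * t)) with (t ^ 3) by ring. apply Rabs_tan_sub_le_cube. lra. }
  assert (Herr' : Rabs (tan t' - t') <= t' * (t * t)).
  { eapply Rle_trans; [apply Rabs_tan_sub_le_cube; lra|].
    simpl. apply Rmult_le_compat_l; [lra|]. nra. }
  replace (a * tan t + b * tan t' - (a * t + b * t'))
    with (a * (tan t - t) + b * (tan t' - t')) by ring.
  eapply Rle_trans; [apply Rabs_triang|]. rewrite !Rabs_mult.
  assert (Rabs a * Rabs (tan t - t) <= Rabs a * (t * (t * t)))
    by (apply Rmult_le_compat_l; [apply Rabs_pos | lra]).
  assert (Rabs b * Rabs (tan t' - t') <= Rabs b * (t' * (t * t)))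
    by (apply Rmult_le_compat_l; [apply Rabs_pos | lra]).
  lra.
Qed.

Lemma Phi_gt_1 : 1 < Phi.
Proof.
  assert (Hs5 : 0 <= sqrt 5) by apply sqrt_pos.
  assert (sqrt 5 * sqrt 5 = 5) by (apply sqrt_sqrt; lra).
  unfold Phi; nra.
Qed.

Lemma inv_Phi_sq : / Phi * / Phi = 1 - / Phi.
Proof.
  assert (Hs5 : sqrt 5 * sqrt 5 = 5) by (apply sqrt_sqrt; lra).
  assert (H1 := Phi_gt_1).
  assert (HPhi2 : Phi * Phi = Phi + 1) by (unfold Phi; nra).
  field_simplify_eq; [nra | lra].
Qed.

Section AngleRecursion.

Variables theta q c : nat -> R.
Hypothesis theta_pos : forall n, 0 < theta n.
Hypothesis q_nonneg : forall n, 0 <= q n.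
Hypothesis q_succ_ge1 : forall n, 1 <= q (S n).
Hypothesis theta_rec : forall n, theta n = q n * theta (S n) + theta (S (S n)).
Hypothesis c_rec : forall n, c (S (S n)) = q n * c (S n) + c n.

Lemma c_theta_invariant n :
  c (S n) * theta n + c n * theta (S n) = c 1%nat * theta 0%nat + c 0%nat * theta 1%nat.
Proof.
  induction n as [|n IH]; [reflexivity|].
  rewrite <- IH, c_rec, (theta_rec n). ring.
Qed.

Lemma Rabs_c_theta_le n :
  Rabs (c (S n)) * theta n + Rabs (c n) * theta (S n)
  <= Rabs (c 1%nat) * theta 0%nat + Rabs (c 0%nat) * theta 1%nat.
Proof.
  induction n as [|n IH]; [lra|].
  apply Rle_trans with (2 := IH).
  assert (Hc : Rabs (c (S (S n))) <= q n * Rabs (c (S n)) + Rabs (c n)).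
  { rewrite c_rec. eapply Rle_trans; [apply Rabs_triang|].
    rewrite Rabs_mult, (Rabs_right (q n)) by (apply Rle_ge, q_nonneg). lra. }
  assert (H1 := theta_pos (S n)). assert (H2 := theta_pos (S (S n))).
  rewrite (theta_rec n).
  assert (Rabs (c (S (S n))) * theta (S n)
          <= (q n * Rabs (c (S n)) + Rabs (c n)) * theta (S n))
    by (apply Rmult_le_compat_r; lra).
  nra.
Qed.

Lemma theta_succ_le_sub n : theta (S (S (S n))) <= theta (S n) - theta (S (S n)).
Proof.
  assert (Hq := q_succ_ge1 n). assert (H := theta_pos (S (S n))).
  rewrite (theta_rec (S n)). nra.
Qed.

Lemma theta_succ_decreasing n : theta (S (S n)) <= theta (S n).
Proof.
  assert (H := theta_succ_le_sub n). assert (H' := theta_pos (S (S (S n)))). lra.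
Qed.

Lemma theta_geometric m :
  theta (S m) <= (/ Phi) ^ m * (theta 1%nat + / Phi * theta 2%nat).
Proof.
  set (r := / Phi). set (E := fun n => theta n + r * theta (S n)).
  assert (Hr : 0 < r) by (apply Rinv_0_lt_compat; generalize Phi_gt_1; lra).
  assert (Hr2 : r * r = 1 - r) by apply inv_Phi_sq.
  (* E_{n+1} <= r E_n is theta_{n+3} <= theta_{n+1} - theta_{n+2}, multiplied by r, using r^2 = 1 - r *)
  assert (HE : forall n, E (S (S n)) <= r * E (S n)).
  { intro n. unfold E.
    assert (H := theta_succ_le_sub n).
    assert (r * theta (S (S (S n))) <= r * (theta (S n) - theta (S (S n))))
      by (apply Rmult_le_compat_l; lra).
    assert (r * (r * theta (S (S n))) = (1 - r) * theta (S (S n))) by (rewrite <- Hr2; ring).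
    lra. }
  assert (HEm : forall n, E (S n) <= r ^ n * E 1%nat).
  { induction n as [|n IH]; [simpl; lra|].
    eapply Rle_trans; [apply HE|]. simpl.
    rewrite Rmult_assoc. apply Rmult_le_compat_l; lra. }
  eapply Rle_trans; [|apply HEm].
  unfold E. assert (H := theta_pos (S (S m))). nra.
Qed.

Lemma tan_approx_error_geometric : exists C : R, exists N : nat, forall n, (N <= n)%nat ->
  Rabs (c (S n) * tan (theta n) + c n * tan (theta (S n))
        - (c 1%nat * theta 0%nat + c 0%nat * theta 1%nat))
  <= C * / Phi ^ (2 * n).
Proof.
  set (r := / Phi). set (e := theta 1%nat + r * theta 2%nat).
  set (M := Rabs (c 1%nat) * theta 0%nat + Rabs (c 0%nat) * theta 1%nat).
  assert (HPhi := Phi_gt_1).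
  assert (Hr : 0 < r < 1).
  { unfold r. split; [apply Rinv_0_lt_compat; lra|].
    rewrite <- Rinv_1. apply Rinv_lt_contravar; lra. }
  assert (He : 0 < e) by (unfold e; generalize (theta_pos 1) (theta_pos 2); nra).
  destruct (pow_lt_1_zero r ltac:(rewrite Rabs_right; lra) (/ e)
              ltac:(apply Rinv_0_lt_compat; lra)) as [N HN].
  exists (M * (e * e) * (Phi * Phi)), (S N).
  intros n Hn. destruct n as [|m]; [lia|].
  rewrite <- (c_theta_invariant (S m)), <- pow_inv. fold r.
  set (t := theta (S m)). set (t' := theta (S (S m))).
  assert (Ht : t <= r ^ m * e) by apply theta_geometric.
  assert (Hsmall : r ^ m * e < 1).
  { specialize (HN m ltac:(lia)). rewrite Rabs_right in HN by (apply Rle_ge, pow_le; lra).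
    apply (Rmult_lt_compat_r e) in HN; [|lra]. rewrite Rinv_l in HN; lra. }
  assert (Ht' : 0 < t' <= t) by (split; [apply theta_pos | apply theta_succ_decreasing]).
  assert (Hpos : 0 < t) by apply theta_pos.
  assert (HM : Rabs (c (S (S m))) * t + Rabs (c (S m)) * t' <= M) by apply Rabs_c_theta_le.
  eapply Rle_trans; [apply Rabs_tan_pair_sub_le; lra|].
  apply Rle_trans with (M * (t * t)); [apply Rmult_le_compat_r; nra|].
  assert (HrPhi : r * Phi = 1) by (unfold r; field; lra).
  assert (HM0 : 0 <= M) by (generalize (Rabs_pos (c (S (S m)))) (Rabs_pos (c (S m))); nra).
  replace (2 * S m)%nat with (m + m + 2)%nat by lia. rewrite !pow_add.
  replace (M * (e * e) * (Phi * Phi) * (r ^ m * r ^ m * r ^ 2))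
    with (M * ((r ^ m * e) * (r ^ m * e)) * ((r * Phi) * (r * Phi))) by ring.
  rewrite HrPhi, !Rmult_1_r. apply Rmult_le_compat_l; [lra|].
  assert (0 <= r ^ m) by (apply pow_le; lra). nra.
Qed.

End AngleRecursion.

Theorem mainTheorem9 (a0 a1 : Z) (u0 u1 : Q) (u : nat -> R)
  (Hu1pos : (0 < u1)%Q) (Hu10 : (u1 < u0)%Q)
  (Hmachin : IZR a0 * atan (Q2R u0) + IZR a1 * atan (Q2R u1) = PI / 4)
  (Hirr : irrational (atan (Q2R u0) / atan (Q2R u1)))
  (Hu0 : u 0%nat = Q2R u0) (Hu1 : u 1%nat = Q2R u1)
  (Hupos : forall n, 0 < u n)
  (Hurec : forall n, atan (u n) =
      INR (cf_q (atan (Q2R u0) / atan (Q2R u1)) n) * atan (u (S n)) + atan (u (S (S n)))) :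
  let alpha := atan (Q2R u0) / atan (Q2R u1) in
  (forall n : nat, (fib n <= denD alpha (S n))%nat) /\
  exists C : R, exists N : nat, forall n : nat, (N <= n)%nat ->
    Rabs (IZR (coefA alpha a0 a1 (S n)) * u n + IZR (coefA alpha a0 a1 n) * u (S n) - PI / 4)
      <= C * / (Phi ^ (2 * n)).
Proof.
  intros alpha. split; [exact (fib_le_denD alpha Hirr)|].
  destruct (tan_approx_error_geometric (fun n => atan (u n))
              (fun n => INR (cf_q alpha n)) (fun n => IZR (coefA alpha a0 a1 n)))
    as [C [N HCN]].
  - intro n. rewrite <- atan_0. apply atan_increasing, Hupos.
  - intro n. apply pos_INR.
  - intro n. apply (le_INR 1), cf_q_succ_ge1, Hirr.
  - exact Hurec.
  - intro n. cbn beta. simpl coefA. rewrite plus_IZR, mult_IZR, <- INR_IZR_INZ. reflexivity.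
  - exists C, N. intros n Hn. specialize (HCN n Hn). cbn beta in HCN.
    rewrite !tan_atan, Hu0, Hu1 in HCN. simpl coefA in HCN. rewrite Hmachin in HCN.
    exact HCN.
Qed.
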